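(* Assume: (A1) $f(x,y)$ and each component of $g(x,y)$ are convex in $y$ for each fixed $x$, and $f,g$ are twice continuously differentiable; (A2) $Y\subseteq\mathbb{R}^m$ is a compact convex set with $\{y:\exists x\in X \text{ such that } g(x,y)\le 0\}\subseteq\mathrm{int}(Y)$; (R1) for each $x\in X$ there exists $y$ with $g(x,y)<0$. Let $\epsilon\ge0$. A point $(\overline{x},\overline{y})$ is a (global) minimizer of $\mathsf{BLP}(\epsilon)$ if and only if for some $\lambda\ge0$ the point $(\overline{x},\overline{y},\lambda)$ is feasible for and a (global) minimizer of $\mathsf{DBP}(\epsilon,0)$.
   Context: Let $F:\mathbb{R}^n\times\mathbb{R}^m\to\mathbb{R}$, $f:\mathbb{R}^n\times\mathbb{R}^m\to\mathbb{R}$, $g:\mathbb{R}^n\times\mathbb{R}^m\to\mathbb{R}^p$, $G:\mathbb{R}^n\to\mathbb{R}^q$; vector inequalities componentwise; $X=\{x:G(x)\le0\}$. $\mathsf{BLP}(\epsilon)$ is: minimize $F(x,y)$ over $(x,y)$ subject to $G(x)\le0$, $f(x,y)\le\min_{y'}\{f(x,y'):g(x,y')\le0\}+\epsilon$ and $g(x,y)\le\epsilon$. For $\mu\ge0$, $h_\mu(\lambda,x)=\min_y\{\mu\|y\|^2+f(x,y)+\lambda^{\mathsf T}g(x,y):y\in Y\}$ with $Y$ from (A2); $\mathcal{C}(\epsilon,\mu)=\{(x,y,\lambda): G(x)\le0,\ g(x,y)\le\epsilon,\ \lambda\ge0,\ f(x,y)-h_\mu(\lambda,x)\le\epsilon\}$;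 and $\mathsf{DBP}(\epsilon,\mu)$ is: minimize $F(x,y)$ over $(x,y,\lambda)\in\mathcal{C}(\epsilon,\mu)$. *)

From HB Require Import structures.
From mathcomp Require Import all_boot all_order all_algebra.
From mathcomp Require Import all_classical all_reals all_analysis.
Set Implicit Arguments. Unset Strict Implicit. Unset Printing Implicit Defensive.
Import Order.TTheory GRing.Theory Num.Theory.
Import numFieldNormedType.Exports.
Local Open Scope classical_set_scope.
Local Open Scope ring_scope.

Section Defs.
Variable R : realType.

Definition vle k (u v : 'rV[R]_k) : Prop := forall i, u 0 i <= v 0 i.
Definition vlt k (u v : 'rV[R]_k) : Prop := forall i, u 0 i < v 0 i.
Definition vle_sc k (u : 'rV[R]_k) (e : R) : Prop := forall i, u 0 i <= e.

Definition dotp k (u v : 'rV[R]_k) : R := \sum_(i < k) u 0 i * v 0 i.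
Definition sqnorm k (u : 'rV[R]_k) : R := \sum_(i < k) u 0 i ^+ 2.

Definition convex_setR k (A : set 'rV[R]_k) : Prop :=
  forall y1 y2 t, A y1 -> A y2 -> 0 <= t <= 1 -> A (t *: y1 + (1 - t) *: y2).
Definition convex_fun k (h : 'rV[R]_k -> R) : Prop :=
  forall y1 y2 t, 0 <= t <= 1 ->
    h (t *: y1 + (1 - t) *: y2) <= t * h y1 + (1 - t) * h y2.

Definition ev k (i : 'I_k) : 'rV[R]_k := delta_mx 0 i.

Definition C2 k (h : 'rV[R]_k -> R) : Prop :=
  continuous h /\
  forall i j : 'I_k,
    (forall z, derivable h z (ev i)) /\
    continuous (fun z => 'D_(ev i) h z) /\
    (forall z, derivable (fun w => 'D_(ev j) h w) z (ev i)) /\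
    continuous (fun z => 'D_(ev i) (fun w => 'D_(ev j) h w) z).

Definition uncurryv n m (T : Type) (h : 'rV[R]_n -> 'rV[R]_m -> T)
  : 'rV[R]_(n + m) -> T := fun z => h (lsubmx z) (rsubmx z).

Variables (n m p q : nat).
Variables (F f : 'rV[R]_n -> 'rV[R]_m -> R)
          (g : 'rV[R]_n -> 'rV[R]_m -> 'rV[R]_p)
          (G : 'rV[R]_n -> 'rV[R]_q) (Y : set 'rV[R]_m).

Definition Xset : set 'rV[R]_n := fun x => vle (G x) 0.

Definition llval (x : 'rV[R]_n) : R :=
  inf [set f x y' | y' in [set y' | vle (g x y') 0]].

Definition BLP_feasible (eps : R) (x : 'rV[R]_n) (y : 'rV[R]_m) : Prop :=
  vle (G x) 0 /\ f x y <= llval x + eps /\ vle_sc (g x y) eps.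

Definition BLP_minimizer (eps : R) (xb : 'rV[R]_n) (yb : 'rV[R]_m) : Prop :=
  BLP_feasible eps xb yb /\
  forall x y, BLP_feasible eps x y -> F xb yb <= F x y.

Definition h_mu (mu : R) (lam : 'rV[R]_p) (x : 'rV[R]_n) : R :=
  inf [set mu * sqnorm y + f x y + dotp lam (g x y) | y in Y].

Definition Cset (eps mu : R) (x : 'rV[R]_n) (y : 'rV[R]_m) (lam : 'rV[R]_p)
  : Prop :=
  vle (G x) 0 /\ vle_sc (g x y) eps /\ vle 0 lam /\ f x y - h_mu mu lam x <= eps.

Definition DBP_minimizer (eps mu : R) (xb : 'rV[R]_n) (yb : 'rV[R]_m)
  (lb : 'rV[R]_p) : Prop :=
  Cset eps mu xb yb lb /\
  forall x y lam, Cset eps mu x y lam -> F xb yb <= F x y.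

End Defs.

From HB Require Import structures.
From mathcomp Require Import all_boot all_order all_algebra.
From mathcomp Require Import all_classical all_reals all_analysis.
From mathcomp Require Import ring lra.
Import Order.TTheory GRing.Theory Num.Theory.
Import numFieldNormedType.Exports.
Local Open Scope classical_set_scope.
Local Open Scope ring_scope.

(* Weak Lagrangian duality gives h_0(lam, x) <= llval x for every lam >= 0, so
   feasibility in DBP(eps, 0) implies feasibility in BLP(eps).  Conversely, for
   x in X strong duality holds with an attained multiplier, llval x = h_0(lam, x),
   so the two problems have the same feasible pairs (x, y) and the same minimizers.

   Strong duality is proved by a penalty argument.  If c lies below the
   lower-level value, the convex system f - c <= 0, g <= 0 has no solution in Y;
   at a minimizer over Y of the sum of the squared positive parts of these
   functions, the first-order condition (Y and the functions are convex) yields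
   weights w >= 0 with w_0 (f - c) + sum_k w_k g_k > 0 on Y.  The Slater point
   forces w_0 > 0, so lam = w / w_0 satisfies c <= f + lam . g on Y.  The same
   Slater point confines these multipliers to a compact box, on which the
   Lipschitz dual function attains its maximum: that maximizer is an exact
   multiplier. *)

Section CompactExtrema.
Context {R : realType} {T : topologicalType}.

Lemma compact_argmin {h : T -> R} {A : set T} :
  continuous h -> compact A -> A !=set0 ->
  exists2 c, A c & forall t, A t -> h c <= h t.
Proof.
move=> ch cA A0; have [c Ac cmin] := compact_EVT_min A0 cA (continuous_subspaceT ch).
by exists c => [|t At]; [rewrite inE in Ac | apply: cmin; rewrite inE].
Qed.

Lemma compact_argmax {h : T -> R} {A : set T} :
  continuous h -> compact A -> A !=set0 ->
  exists2 c, A c & forall t, A t -> h t <= h c.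
Proof.
move=> ch cA A0; have [c Ac cmax] := compact_EVT_max A0 cA (continuous_subspaceT ch).
by exists c => [|t At]; [rewrite inE in Ac | apply: cmax; rewrite inE].
Qed.

End CompactExtrema.

Lemma continuous_sumr {R : realType} {T : topologicalType} (I : finType)
    (h : I -> T -> R) :
  (forall i, continuous (h i)) -> continuous (fun z => \sum_i h i z).
Proof.
move=> h_cont; apply: continuous_big; first exact: add_continuous.
by move=> i _; exact: h_cont.
Qed.

Lemma lipschitz_continuous {R : realType} {V : normedModType R} {h : V -> R} {C : R} :
  0 <= C -> (forall a b, h a <= h b + C * `|a - b|) -> continuous h.
Proof.
move=> C0 h_lip x; apply/cvgrPdist_lt => e e0.
have C1 : 0 < C + 1 by rewrite ltr_wpDl.
near=> y.
have xy : `|x - y| < e / (C + 1).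
  near: y; apply/nbhs_normP; exists (e / (C + 1)); first by rewrite /= divr_gt0.
  by move=> y /=.
have hxy : `|h x - h y| <= C * `|x - y|.
  have := h_lip x y; have := h_lip y x; rewrite distrC ler_norml; lra.
apply: le_lt_trans hxy _; move: xy; rewrite ltr_pdivlMr // => xy.
apply: le_lt_trans xy; rewrite mulrC ler_wpM2l //; lra.
Unshelve. all: by end_near. Qed.

Lemma continuous_row_mx {R : realType} n m (x : 'rV[R]_n) :
  continuous (fun y : 'rV[R]_m => row_mx x y).
Proof.
move=> y s /= /(nbhs_ballP (row_mx x y)) [e e0 es].
apply/nbhs_ballP; exists e => //= y' [_ yy']; apply: es; split => // i j.
by rewrite !mxE; case: splitP => k _; [exact: ballxx | exact: yy'].
Qed.

Lemma continuous_uncurryv_section {R : realType} {n m : nat} {T : topologicalType}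
    {h : 'rV[R]_n -> 'rV[R]_m -> T} x :
  continuous (uncurryv h) -> continuous (h x).
Proof.
move=> h_cont y; have -> : h x = uncurryv h \o row_mx x.
  by apply: funext => z; rewrite /uncurryv /= row_mxKl row_mxKr.
by apply: continuous_comp; [exact: continuous_row_mx | exact: h_cont].
Qed.

Lemma quadratic_perturbation_ge0 {R : realFieldType} (E Q : R) : 0 <= Q ->
  (forall s, 0 < s <= 1 -> 0 <= 2 * s * E + s ^+ 2 * Q) -> 0 <= E.
Proof.
move=> Q0 H; rewrite leNgt; apply/negP => E0.
have QE : 0 < Q - E by lra.
pose s := - E / (Q - E).
have sQE : s * (Q - E) = - E by rewrite /s mulfVK // gt_eqF.
have s0 : 0 < s by rewrite /s divr_gt0 // oppr_gt0.
have s1 : s <= 1 by rewrite /s ler_pdivrMr // mul1r; lra.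
have := H s; rewrite s0 s1 => /(_ isT); nra.
Qed.

Section PositivePart.
Context {R : realFieldType}.
Implicit Types a b t : R.

Definition pos_part a := Num.max a 0.

Lemma pos_partE a : pos_part a = if a <= 0 then 0 else a.
Proof. by rewrite /pos_part; case: leP => [/max_r|/ltW/max_l]. Qed.

Lemma pos_part_ge0 a : 0 <= pos_part a.
Proof. by rewrite le_max lexx orbT. Qed.

Lemma pos_part_eq0 a : (pos_part a == 0) = (a <= 0).
Proof. by rewrite pos_partE; case: leP => [|a_gt0]; rewrite ?eqxx ?gt_eqF. Qed.

Lemma pos_part_mulr a : pos_part a * a = pos_part a ^+ 2.
Proof. by rewrite pos_partE; case: ifP => _; rewrite ?mul0r expr2 ?mul0r. Qed.

Lemma pos_part_le a b : a <= b -> pos_part a <= pos_part b.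
Proof. by move=> ab; rewrite !pos_partE; case: (leP a 0); case: (leP b 0); lra. Qed.

Lemma sqr_pos_partD_le a t :
  pos_part (a + t) ^+ 2 <= pos_part a ^+ 2 + 2 * pos_part a * t + t ^+ 2.
Proof. by rewrite !pos_partE; case: (leP a 0); case: (leP (a + t) 0); nra. Qed.

End PositivePart.

Lemma continuous_pos_part {R : realType} {T : topologicalType} (h : T -> R) :
  continuous h -> continuous (fun z => pos_part (h z)).
Proof. by move=> h_cont; apply: max_fun_continuous => // ?; exact: cvg_cst. Qed.

Lemma sqr_pos_part_convex_le {R : realType} {m : nat} (h : 'rV[R]_m -> R) y x s :
  convex_fun h -> 0 <= s <= 1 ->
  pos_part (h (s *: y + (1 - s) *: x)) ^+ 2 <=
  pos_part (h x) ^+ 2 + 2 * s * (pos_part (h x) * (h y - h x))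
    + s ^+ 2 * (h y - h x) ^+ 2.
Proof.
move=> h_convex s01.
set P := pos_part (h x); set D := h y - h x.
have hz : h (s *: y + (1 - s) *: x) <= h x + s * D.
  by apply: le_trans (h_convex y x s s01) _; rewrite /D; lra.
have -> : P ^+ 2 + 2 * s * (P * D) + s ^+ 2 * D ^+ 2 =
          P ^+ 2 + 2 * P * (s * D) + (s * D) ^+ 2 by ring.
apply: le_trans (sqr_pos_partD_le _ _).
by rewrite ler_sqr ?nnegrE ?pos_part_ge0 // pos_part_le.
Qed.

Section ConvexAlternative.
Context {R : realType} {k m : nat}.
Variables (h : 'I_k -> 'rV[R]_m -> R) (Y : set 'rV[R]_m).
Hypotheses (h_convex : forall i, convex_fun (h i)) (Y_convex : convex_setR Y).

Definition penalty y := \sum_i pos_part (h i y) ^+ 2.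

Lemma penalty_argmin_first_order {ys y} :
  Y ys -> (forall z, Y z -> penalty ys <= penalty z) ->
  Y y -> 0 <= \sum_i pos_part (h i ys) * (h i y - h i ys).
Proof.
move=> Yys ys_min Yy.
apply: (@quadratic_perturbation_ge0 _ _ (\sum_i (h i y - h i ys) ^+ 2)).
  by apply: sumr_ge0 => i _; exact: sqr_ge0.
move=> s /andP[s_gt0 s_le1].
have s01 : 0 <= s <= 1 by rewrite ltW.
have := le_trans (ys_min _ (Y_convex y ys s Yy Yys s01))
  (ler_sum _ (fun i _ => sqr_pos_part_convex_le (h i) y ys s (h_convex i) s01)).
by rewrite !big_split /= -!mulr_sumr /penalty; lra.
Qed.

Hypotheses (h_cont : forall i, continuous (h i)) (Y_compact : compact Y).

Lemma convex_alternative : Y !=set0 ->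
  ~ (exists2 y, Y y & forall i, h i y <= 0) ->
  exists2 w : 'I_k -> R, (forall i, 0 <= w i) &
    forall y, Y y -> 0 < \sum_i w i * h i y.
Proof.
move=> Y0 infeasible.
have penalty_cont : continuous penalty.
  apply: continuous_sumr => i z.
  apply: (@continuous_comp _ _ _ (fun z => pos_part (h i z)) (fun a => a ^+ 2)).
    exact: continuous_pos_part.
  exact: exprn_continuous.
have [ys Yys ys_min] := compact_argmin penalty_cont Y_compact Y0.
exists (fun i => pos_part (h i ys)) => [i|y Yy]; first exact: pos_part_ge0.
have penalty_gt0 : 0 < penalty ys.
  rewrite lt_def sumr_ge0 ?andbT => [|i _]; last exact: sqr_ge0.
  apply/eqP => /psumr_eq0P w0; apply: infeasible; exists ys => // i.
  by rewrite -pos_part_eq0 -sqrf_eq0 w0 // => j _; exact: sqr_ge0.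
have := penalty_argmin_first_order Yys ys_min Yy.
rewrite (eq_bigr _ (fun i _ => mulrBr _ _ _)) sumrB.
rewrite (eq_bigr _ (fun i _ => pos_part_mulr _)) -/(penalty ys); lra.
Qed.

End ConvexAlternative.

Lemma vltW {R : realType} {k} {u v : 'rV[R]_k} : vlt u v -> vle u v.
Proof. by move=> uv i; exact/ltW. Qed.

Lemma mxentry_le_norm {R : realType} {m n} (A : 'M[R]_(m, n)) i j : `|A i j| <= `|A|.
Proof.
rewrite [leRHS]/Num.norm /= mx_normrE.
by apply/bigmax_geP; right => /=; exists (i, j).
Qed.

Lemma dotpBl {R : realType} {k} (a b v : 'rV[R]_k) :
  dotp a v - dotp b v = dotp (a - b) v.
Proof. by rewrite /dotp -sumrB; apply: eq_bigr => i _; rewrite !mxE mulrBl. Qed.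

Lemma dotp_le_norm {R : realType} {k} (u v : 'rV[R]_k) :
  dotp u v <= `|u| * \sum_i `|v 0 i|.
Proof.
rewrite /dotp mulr_sumr; apply: ler_sum => i _.
by apply: le_trans (ler_norm _) _; rewrite normrM ler_wpM2r // mxentry_le_norm.
Qed.

Section LagrangeDuality.
Context {R : realType} {m p : nat}.
Variables (f : 'rV[R]_m -> R) (g : 'rV[R]_m -> 'rV[R]_p) (Y : set 'rV[R]_m).
Hypotheses (f_cont : continuous f) (g_cont : forall k, continuous (fun y => g y 0 k)).
Hypotheses (Y_compact : compact Y) (feasible_subY : forall y, vle (g y) 0 -> Y y).

Definition primal_value := inf [set f y | y in [set y | vle (g y) 0]].
Definition lagrangian (lam : 'rV[R]_p) y := f y + dotp lam (g y).
Definition dual_fun (lam : 'rV[R]_p) := inf [set lagrangian lam y | y in Y].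

Lemma continuous_lagrangian lam : continuous (lagrangian lam).
Proof.
move=> y; apply: (@continuousD _ _ _ f (fun z => dotp lam (g z))); first exact: f_cont.
apply: (@continuous_sumr _ _ _ (fun i z => lam 0 i * g z 0 i)) => i z.
by apply: (@continuousM _ _ (fun=> lam 0 i)); [exact: cst_continuous | exact: g_cont].
Qed.

Lemma dual_fun_le_lagrangian lam {y} : Y y -> dual_fun lam <= lagrangian lam y.
Proof.
move=> Yy; apply: ge_inf; last by exists y.
have [c _ c_min] :=
  compact_argmin (continuous_lagrangian lam) Y_compact (ex_intro _ y Yy).
by exists (lagrangian lam c) => _ [z Yz <-]; exact: c_min.
Qed.

Lemma primal_value_le {y} : vle (g y) 0 -> primal_value <= f y.
Proof.
move=> gy; apply: ge_inf; last by exists y.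
have [c _ c_min] :=
  compact_argmin f_cont Y_compact (ex_intro _ y (feasible_subY _ gy)).
by exists (f c) => _ [z gz <-]; exact/c_min/feasible_subY.
Qed.

Lemma lagrangian_le {lam y} : vle 0 lam -> vle (g y) 0 -> lagrangian lam y <= f y.
Proof.
move=> lam_ge0 gy; rewrite /lagrangian gerDl; apply: sumr_le0 => i _.
by apply: mulr_ge0_le0; [move: (lam_ge0 i) | move: (gy i)]; rewrite mxE.
Qed.

Lemma weak_duality lam : (exists y, vle (g y) 0) -> vle 0 lam ->
  dual_fun lam <= primal_value.
Proof.
move=> [y0 gy0] lam_ge0; apply: lb_le_inf; first by exists (f y0), y0.
move=> _ [y gy <-]; apply: le_trans (lagrangian_le lam_ge0 gy).
exact/dual_fun_le_lagrangian/feasible_subY.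
Qed.

Lemma dual_fun_lipschitz : Y !=set0 ->
  exists2 C, 0 <= C & forall a b, dual_fun a <= dual_fun b + C * `|a - b|.
Proof.
move=> Y0; have g_norm_cont : continuous (fun y => \sum_k `|g y 0 k|).
  apply: continuous_sumr => k y.
  by apply: (@continuous_comp _ _ _ (fun y => g y 0 k) Num.norm);
    [exact: g_cont | exact: norm_continuous].
have [c _ c_max] := compact_argmax g_norm_cont Y_compact Y0.
exists (\sum_k `|g c 0 k|) => [|a b]; first exact: sumr_ge0.
rewrite -lerBlDr; apply: lb_le_inf.
  by case: Y0 => y Yy; exists (lagrangian b y), y.
move=> _ [y Yy <-]; rewrite lerBlDr.
apply: le_trans (dual_fun_le_lagrangian a Yy) _.
rewrite -lerBlDl /lagrangian opprD addrACA subrr add0r dotpBl.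
apply: le_trans (dotp_le_norm _ _) _; rewrite mulrC ler_wpM2r //; exact: c_max.
Qed.

Hypotheses (f_convex : convex_fun f) (g_convex : forall k, convex_fun (fun y => g y 0 k)).
Hypotheses (Y_convex : convex_setR Y) (slater : exists y, vlt (g y) 0).

Lemma near_optimal_multiplier {c} : (forall y, vle (g y) 0 -> c < f y) ->
  exists2 lam, vle 0 lam & forall y, Y y -> c <= lagrangian lam y.
Proof.
move=> c_lt_f; have [yb g_yb_lt0] := slater.
pose h (i : 'I_p.+1) y := if unlift ord0 i is Some k then g y 0 k else f y - c.
have h0 y : h ord0 y = f y - c by rewrite /h unlift_none.
have hS k y : h (lift ord0 k) y = g y 0 k by rewrite /h liftK.
have h_convex i : convex_fun (h i).
  rewrite /h; case: unliftP => [k|] _; first exact: g_convex.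
  move=> y1 y2 t t01; rewrite lerBlDr.
  have -> : t * (f y1 - c) + (1 - t) * (f y2 - c) + c = t * f y1 + (1 - t) * f y2
    by ring.
  exact: f_convex.
have h_cont i : continuous (h i).
  rewrite /h; case: unliftP => [k|] _ y; first exact: g_cont.
  by apply: (@continuousB _ _ _ f (cst c)); [exact: f_cont | exact: cst_continuous].
have Y0 : Y !=set0 by exists yb; exact: feasible_subY _ (vltW g_yb_lt0).
have infeasible : ~ exists2 y, Y y & forall i, h i y <= 0.
  move=> [y Yy h_le0]; have gy : vle (g y) 0.
    by move=> k; rewrite mxE -hS; exact: h_le0.
  by have := h_le0 ord0; rewrite h0; have := c_lt_f _ gy; lra.
have [w w_ge0 w_pos] :=
  convex_alternative _ _ h_convex Y_convex h_cont Y_compact Y0 infeasible.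
have w0_gt0 : 0 < w ord0.
  rewrite lt_def w_ge0 andbT; apply/eqP => w0.
  have := w_pos yb (feasible_subY _ (vltW g_yb_lt0)).
  rewrite big_ord_recl w0 mul0r add0r ltNge => /negP; apply.
  apply: sumr_le0 => k _; rewrite hS; apply: mulr_ge0_le0 => //.
  by apply: ltW; move: (g_yb_lt0 k); rewrite mxE.
exists (\row_k (w (lift ord0 k) / w ord0)) => [k|y Yy].
  by rewrite !mxE; exact: divr_ge0.
rewrite /lagrangian; have := w_pos y Yy; rewrite big_ord_recl h0.
under eq_bigr do rewrite hS.
have -> : dotp (\row_k (w (lift ord0 k) / w ord0)) (g y) =
          (\sum_k w (lift ord0 k) * g y 0 k) / w ord0.
  by rewrite /dotp mulr_suml; apply: eq_bigr => k _; rewrite mxE mulrAC.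
rewrite -lerBlDl ler_pdivlMr //; nra.
Qed.

Lemma multiplier_le_slater {lam yb c} : vle 0 lam -> vle (g yb) 0 ->
  c <= lagrangian lam yb -> forall k, lam 0 k * - g yb 0 k <= f yb - c.
Proof.
move=> lam_ge0 g_yb_le0 c_le k.
have sum_le : \sum_j lam 0 j * - g yb 0 j <= f yb - c.
  rewrite (eq_bigr _ (fun j _ => mulrN _ _)) sumrN.
  by move: c_le; rewrite /lagrangian /dotp; lra.
apply: le_trans sum_le; rewrite (bigD1 k) //= lerDl; apply: sumr_ge0 => j _.
by apply: mulr_ge0; [move: (lam_ge0 j) | move: (g_yb_le0 j)]; rewrite mxE // oppr_ge0.
Qed.

Theorem strong_duality : exists2 lam, vle 0 lam & primal_value <= dual_fun lam.
Proof.
have [yb g_yb_lt0] := slater; have g_yb_le0 := vltW g_yb_lt0.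
have Y0 : Y !=set0 by exists yb; exact: feasible_subY.
have neg_g_gt0 k : 0 < - g yb 0 k by rewrite oppr_gt0; move: (g_yb_lt0 k); rewrite mxE.
(* Multipliers for any c >= primal_value - 1 lie in B, by multiplier_le_slater. *)
pose K := f yb - primal_value + 1.
have K_ge0 : 0 <= K by have := primal_value_le g_yb_le0; rewrite /K; lra.
pose B := [set l : 'rV[R]_p | forall k, `[0, K / - g yb 0 k]%classic (l ord0 k)].
have B_compact : compact B := rV_compact
  (A := fun k => `[0, K / - g yb 0 k]%classic) (fun k => @segment_compact R _ _).
have B0 : B !=set0.
  by exists 0 => k; rewrite /= mxE in_itv /= lexx divr_ge0 // ltW.
have [C C_ge0 dual_lip] := dual_fun_lipschitz Y0.
have [ls Bls ls_max] :=
  compact_argmax (lipschitz_continuous C_ge0 dual_lip) B_compact B0.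
exists ls => [k|]; first by move: (Bls k); rewrite /= mxE in_itv /= => /andP[].
apply/ler_addgt0Pr => e e_gt0; pose d := Num.min e 1.
have d_gt0 : 0 < d by rewrite lt_min e_gt0 ltr01.
have d_le_e : d <= e by rewrite ge_min lexx.
have d_le1 : d <= 1 by rewrite ge_min lexx orbT.
have c_lt_f y : vle (g y) 0 -> primal_value - d < f y.
  by move=> gy; have := primal_value_le gy; lra.
have [lam lam_ge0 lam_lagr] := near_optimal_multiplier c_lt_f.
have B_lam : B lam.
  move=> k; rewrite /= in_itv /=; have := lam_ge0 k; rewrite mxE => -> /=.
  rewrite ler_pdivlMr //; apply: le_trans (multiplier_le_slater lam_ge0 g_yb_le0
    (lam_lagr _ (feasible_subY _ g_yb_le0)) k) _.
  by rewrite /K; lra.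
have dual_lam : primal_value - d <= dual_fun lam.
  apply: lb_le_inf; first by case: Y0 => y Yy; exists (lagrangian lam y), y.
  by move=> _ [y Yy <-]; exact: lam_lagr.
by have := ls_max _ B_lam; lra.
Qed.

End LagrangeDuality.

Lemma h_mu0E {R : realType} n m p (f : 'rV[R]_n -> 'rV[R]_m -> R)
    (g : 'rV[R]_n -> 'rV[R]_m -> 'rV[R]_p) (Y : set 'rV[R]_m) lam x :
  h_mu f g Y 0 lam x = dual_fun (f x) (g x) Y lam.
Proof. by congr inf; apply: eq_imagel => y _; rewrite mul0r add0r. Qed.

Lemma llvalE {R : realType} n m p (f : 'rV[R]_n -> 'rV[R]_m -> R)
    (g : 'rV[R]_n -> 'rV[R]_m -> 'rV[R]_p) x :
  llval f g x = primal_value (f x) (g x).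
Proof. by []. Qed.

Theorem proposition4 (R : realType) (n m p q : nat)
  (F f : 'rV[R]_n -> 'rV[R]_m -> R)
  (g : 'rV[R]_n -> 'rV[R]_m -> 'rV[R]_p)
  (G : 'rV[R]_n -> 'rV[R]_q) (Y : set 'rV[R]_m)
  (* (A1) *)
  (hfconv : forall x, convex_fun (f x))
  (hgconv : forall x (k : 'I_p), convex_fun (fun y => g x y 0 k))
  (hfC2 : C2 (uncurryv f))
  (hgC2 : forall k : 'I_p, C2 (uncurryv (fun x y => g x y 0 k)))
  (* (A2) *)
  (hYcomp : compact Y) (hYconv : convex_setR Y)
  (hYint : [set y | exists x, Xset G x /\ vle (g x y) 0] `<=` interior Y)
  (* (R1) *)
  (hslater : forall x, Xset G x -> exists y, vlt (g x y) 0)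
  (eps : R) (heps : 0 <= eps) (xb : 'rV[R]_n) (yb : 'rV[R]_m) :
  BLP_minimizer F f g G eps xb yb <->
  exists lam : 'rV[R]_p, vle 0 lam /\ DBP_minimizer F f g G Y eps 0 xb yb lam.
Proof.
have f_cont x := continuous_uncurryv_section x hfC2.1.
have g_cont x k := continuous_uncurryv_section x (hgC2 k).1.
have feasible_subY x : Xset G x -> forall y, vle (g x y) 0 -> Y y.
  by move=> Gx y gy; apply: interior_subset; apply: hYint; exists x.
have weak x lam : Xset G x -> vle 0 lam -> h_mu f g Y 0 lam x <= llval f g x.
  move=> Gx; rewrite h_mu0E llvalE; apply: weak_duality => //.
  - exact: feasible_subY.
  - by have [y /vltW gy] := hslater x Gx; exists y.
have strong x : Xset G x ->
    exists2 lam, vle 0 lam & llval f g x <= h_mu f g Y 0 lam x.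
  move=> Gx; have [lam lam_ge0 dual_ge] := strong_duality _ _ _
    (f_cont x) (g_cont x) hYcomp (feasible_subY x Gx)
    (hfconv x) (hgconv x) hYconv (hslater x Gx).
  by exists lam; rewrite // h_mu0E llvalE.
split.
- move=> [[Gxb [fxb gxb]] xb_min]; have [lam lam_ge0 dual_ge] := strong xb Gxb.
  exists lam; split => //; split; first by do !split => //; lra.
  move=> x y lam' [Gx [gxy [lam'_ge0 fxy]]]; apply: xb_min.
  by do !split => //; have := weak x lam' Gx lam'_ge0; lra.
- move=> [lam [lam_ge0 [[Gxb [gxb [_ fxb]]] xb_min]]]; split.
    by do !split => //; have := weak xb lam Gxb lam_ge0; lra.
  move=> x y [Gx [fxy gxy]]; have [lam' lam'_ge0 dual_ge] := strong x Gx.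
  by apply: (xb_min x y lam'); do !split => //; lra.
Qed.
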